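(* There exist elements $c_1,\dots,c_r$ of $\mathbb Q(R_{1,0},\dots,R_{r,1})$, independent of $n$, such that with $c_0=c_{r+1}=1$, $$\sum_{m=0}^{r+1}(-1)^m\,c_{r+1-m}\,R_{1,n+m}=0\qquad\text{for all } n\in\mathbb Z.$$
   Context: Fix an integer $r\ge1$ and let $I_r=\{1,\dots,r\}$. Let $R_{1,0},\dots,R_{r,0},R_{1,1},\dots,R_{r,1}$ be $2r$ algebraically independent indeterminates over $\mathbb Q$. The $A_r$ $Q$-system is the unique family $(R_{\alpha,n})_{0\le\alpha\le r+1,\ n\in\mathbb Z}$ of nonzero elements of $\mathbb Q(R_{1,0},\dots,R_{r,1})$ with these initial values, $R_{0,n}=R_{r+1,n}=1$ for all $n$, and $R_{\alpha,n+1}R_{\alpha,n-1}=R_{\alpha,n}^2+R_{\alpha+1,n}R_{\alpha-1,n}$ for $\alpha\in I_r$, $n\in\mathbb Z$. *)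

From HB Require Import structures.
From mathcomp Require Import all_boot all_order all_algebra.
Set Implicit Arguments. Unset Strict Implicit. Unset Printing Implicit Defensive.
Import Order.TTheory GRing.Theory Num.Theory.
Local Open Scope ring_scope.

(* Polynomial ring over Q in k indeterminates, built as iterated
   univariate polynomial rings: mpoly 0 = Q, mpoly k.+1 = (mpoly k)[X]. *)
Fixpoint mpoly (k : nat) : idomainType :=
  match k with
  | 0 => rat
  | k'.+1 => {poly (mpoly k')}
  end.

(* The i-th indeterminate (0 <= i < k) of mpoly k: the indeterminate
   adjoined at level i.+1, embedded as a constant in the higher levels. *)
Fixpoint mvar (k : nat) (i : nat) : mpoly k :=
  match k return mpoly k with
  | 0 => 0
  | k'.+1 => if i == k' then ('X : {poly (mpoly k')}) else (mvar k' i)%:P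
  end.

Definition ratfun (k : nat) : fieldType := {fraction (mpoly k)}.

Definition rvar (k i : nat) : ratfun k := tofrac (mvar k i).

(* R : nat -> int -> K is the A_r Q-system with initial data
   R_{a,0} = x_{a-1}, R_{a,1} = x_{r+a-1} (a = 1..r) in K = Q(x_0..x_{2r-1}). *)
Definition is_Qsystem (r : nat) (R : nat -> int -> ratfun (r + r)) : Prop :=
  [/\ forall a : nat, (1 <= a <= r)%N -> R a 0 = rvar (r + r) a.-1 /\
                                         R a 1 = rvar (r + r) (r + a.-1),
      forall n : int, R 0%N n = 1 /\ R r.+1 n = 1,
      forall (a : nat) (n : int), (a <= r.+1)%N -> R a n != 0 &
      forall (a : nat) (n : int), (1 <= a <= r)%N ->
        R a (n + 1) * R a (n - 1) = R a n ^+ 2 + R a.+1 n * R a.-1 n].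

From HB Require Import structures.
From mathcomp Require Import all_boot all_order all_algebra.
From mathcomp Require Import perm zify ring.
Import Order.TTheory GRing.Theory Num.Theory.
Local Open Scope ring_scope.

(* Write x(n) = R_{1,n} and T_k(n) = det [x(n + j - i)]_{0 <= i,j < k} for the
   Toeplitz determinants of x.
   1. A Schur-complement computation gives the Desnanot-Jacobi identity
        T_k(n) T_{k+2}(n) = T_{k+1}(n)^2 - T_{k+1}(n+1) T_{k+1}(n-1)
      whenever T_k(n) != 0.
   2. Comparing it with the Q-system relation, induction on a gives
      R_{a,n} = +- T_a(n); since R_{r+1,n} = 1, T_{r+1}(n) = +-1 is constant
      and nonzero, and then the identity forces T_{r+2}(n) = 0.
   3. Hence the (r+2)-Toeplitz matrix at n has a left kernel vector c with
      c_0 = 1, unique since T_{r+1}(n) != 0.  The kernel vectors at n and n+1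
      solve the same r+1 equations, so c does not depend on n, and
      sum_i c_i x(M - i) = 0 for all M.  Writing the shift of the Toeplitz
      matrix as a companion matrix and taking determinants gives
      c_{r+1} = (-1)^{r+1}.
   4. Reversing the indices and inserting signs gives the theorem.
   Only the boundary values, the nonvanishing and the recurrence of the
   Q-system are used, over an arbitrary field. *)

Set Implicit Arguments.
Unset Strict Implicit.

Lemma toep_idxSS (n : int) (a b : nat) : n + b.+1%:Z - a.+1%:Z = n + b%:Z - a%:Z.
Proof. lia. Qed.

Lemma toep_idxSr (n a : int) (b : nat) : n + b.+1%:Z - a = (n + 1) + b%:Z - a.
Proof. lia. Qed.

Lemma toep_idxSl (n : int) (a b : nat) : n + b%:Z - a.+1%:Z = (n - 1) + b%:Z - a%:Z.
Proof. lia. Qed.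

(* [cyc k] is the cycle 0 -> 1 -> ... -> k -> 0, fixing every p > k;
   permuting rows and columns by it brings the index k in front of 0..k-1. *)
Definition cyc (k p : nat) : nat :=
  if (p < k)%N then p.+1 else if p == k then 0%N else p.

Definition cyc_inv (k p : nat) : nat :=
  if p == 0%N then k else if (p <= k)%N then p.-1 else p.

Lemma cycK k : cancel (cyc k) (cyc_inv k).
Proof.
move=> p; rewrite /cyc /cyc_inv; case: (ltngtP p k) => [h|h|->] //=.
- by rewrite h.
- by rewrite gtn_eqF ?(leq_ltn_trans _ h) // leqNgt h.
Qed.

Lemma cyc_lt k m p : (k < m)%N -> (p < m)%N -> (cyc k p < m)%N.
Proof.
move=> km pm; rewrite /cyc; case: ifP => [pk|_]; first exact: leq_ltn_trans pk km.
by case: eqP => // _; exact: leq_ltn_trans (leq0n _) km.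
Qed.

Lemma cyc_small k i : (i < k)%N -> cyc k i = i.+1.
Proof. by rewrite /cyc => ->. Qed.

Section CyclicPermutation.
Variables (K : comRingType) (m k : nat) (km : (k < m)%N).

Definition cyc_ord (i : 'I_m) : 'I_m := Ordinal (cyc_lt km (ltn_ord i)).

Lemma cyc_ord_inj : injective cyc_ord.
Proof. by move=> i j /(congr1 val) /= /(can_inj (@cycK k)) /val_inj. Qed.

Definition cyc_perm : 'S_m := perm cyc_ord_inj.

Lemma cyc_rowsE (F : nat -> nat -> K) :
  \matrix_(i < m, j < m) F (cyc k i) j = row_perm cyc_perm (\matrix_(i, j) F i j).
Proof. by apply/matrixP => i j; rewrite !mxE permE. Qed.

Lemma cyc_colsE (F : nat -> nat -> K) :
  \matrix_(i < m, j < m) F i (cyc k j) = col_perm cyc_perm (\matrix_(i, j) F i j).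
Proof. by apply/matrixP => i j; rewrite !mxE permE. Qed.

Lemma det_cyc_conj (F : nat -> nat -> K) :
  \det (\matrix_(i < m, j < m) F (cyc k i) (cyc k j)) = \det (\matrix_(i < m, j < m) F i j).
Proof.
rewrite (cyc_rowsE (fun i j => F i (cyc k j))) cyc_colsE row_permE col_permE.
rewrite !det_mulmx !det_perm odd_permV.
by rewrite mulrCA -signr_addb addbb expr0 mulr1.
Qed.

Lemma det_cyc_rows_cols (F G : nat -> nat -> K) :
  \det (\matrix_(i < m, j < m) F (cyc k i) j) * \det (\matrix_(i < m, j < m) G i (cyc k j)) =
  \det (\matrix_(i < m, j < m) F i j) * \det (\matrix_(i < m, j < m) G i j).
Proof.
rewrite cyc_rowsE cyc_colsE row_permE col_permE !det_mulmx !det_perm odd_permV.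
by rewrite [_ * (-1) ^+ _]mulrC mulrACA -signr_addb addbb expr0 mul1r.
Qed.

End CyclicPermutation.

Lemma mx_fun_block (T : Type) k l (E : nat -> nat -> T) :
  \matrix_(i < k + l, j < k + l) E i j =
  block_mx (\matrix_(i < k, j < k) E i j) (\matrix_(i < k, j < l) E i (k + j)%N)
           (\matrix_(i < l, j < k) E (k + i)%N j)
           (\matrix_(i < l, j < l) E (k + i)%N (k + j)%N).
Proof.
apply/matrixP => i j.
by case: (split_ordP i) => i' ->; case: (split_ordP j) => j' ->;
  rewrite ?block_mxEul ?block_mxEur ?block_mxEdl ?block_mxEdr !mxE.
Qed.

Section DesnanotJacobi.
Variable K : comUnitRingType.

Lemma det_block_schur k l (A : 'M[K]_k) (B : 'M_(k, l)) C (D : 'M_l) : A \in unitmx ->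
  \det (block_mx A B C D) = \det A * \det (D - C *m invmx A *m B).
Proof.
move=> uA.
have -> : block_mx A B C D =
    block_mx A 0 C 1%:M *m block_mx 1%:M (invmx A *m B) 0 (D - C *m invmx A *m B).
  rewrite mulmx_block !mulmx1 !mul0mx !mulmx0 !mul1mx !addr0 ?add0r.
  by rewrite mulmxA (mulmxV uA) mul1mx mulmxA addrC subrK.
by rewrite det_mulmx det_lblock det_ublock !det1 mulr1 mul1r.
Qed.

Lemma det_mx2 (S : 'M[K]_2) : \det S = S 0 0 * S 1 1 - S 0 1 * S 1 0.
Proof.
rewrite (expand_det_row _ 0) !big_ord_recl big_ord0 addr0 /cofactor !det_mx11 !mxE.
have -> : lift 0 (ord0 : 'I_1) = 1 :> 'I_2 by apply: val_inj.
have -> : lift 1 (ord0 : 'I_1) = 0 :> 'I_2 by apply: val_inj.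
by rewrite /= expr0 expr1 !mul1r mulN1r mulrN.
Qed.

Definition bordered k (E : nat -> nat -> K) (p q : nat) : 'M[K]_(k + 1) :=
  \matrix_(i < k + 1, j < k + 1)
    E (if (i < k)%N then i : nat else (k + p)%N) (if (j < k)%N then j : nat else (k + q)%N).

Lemma addn_ltF k i : (k + i < k)%N = false.
Proof. by rewrite ltnNge leq_addr. Qed.

(* Sylvester's identity for bordered minors (Desnanot-Jacobi): both sides
   are det A times the corresponding 2 x 2 data of the Schur complement. *)
Lemma det_bordered_DJ k (E : nat -> nat -> K) :
  \matrix_(i < k, j < k) E i j \in unitmx ->
  \det (\matrix_(i < k, j < k) E i j) * \det (\matrix_(i < k + 2, j < k + 2) E i j) =
  \det (bordered k E 0 0) * \det (bordered k E 1 1)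
    - \det (bordered k E 0 1) * \det (bordered k E 1 0).
Proof.
move=> uA; rewrite (mx_fun_block k 2 E) det_block_schur // det_mx2.
set A := \matrix_(i < k, j < k) E i j.
set S := _ - _ *m invmx A *m _.
have bordered_schur (p q : 'I_2) : \det (bordered k E p q) = \det A * S p q.
  rewrite /bordered (mx_fun_block k 1 (fun i j : nat =>
    E (if (i < k)%N then i else (k + p)%N) (if (j < k)%N then j else (k + q)%N))).
  have -> : \matrix_(i < k, j < k) E (if (i < k)%N then i : nat else (k + p)%N)
                                     (if (j < k)%N then j : nat else (k + q)%N) = A.
    by apply/matrixP => i j; rewrite !mxE !ltn_ord.
  rewrite det_block_schur // det_mx11 !mxE !addn_ltF; congr (_ * (_ - _)).
  apply: eq_bigr => j _; rewrite !mxE addn_ltF ltn_ord ?addn0; congr (_ * _).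
  by apply: eq_bigr => l _; rewrite !mxE addn_ltF ltn_ord ?addn0.
rewrite (bordered_schur 0 0) (bordered_schur 1 1) (bordered_schur 0 1) (bordered_schur 1 0).
ring.
Qed.

End DesnanotJacobi.

Section Toeplitz.
Variables (K : fieldType) (x : int -> K).

Definition toep_mx k n : 'M[K]_k :=
  \matrix_(i < k, j < k) x (n + (j : nat)%:Z - (i : nat)%:Z).
Definition toep k n : K := \det (toep_mx k n).

Lemma bordered_idx0 k (i : nat) : (i < k + 1)%N -> (if (i < k)%N then i else (k + 0)%N) = i.
Proof.
by rewrite addn0 addn1 ltnS; case: ltnP => // ki ik; apply/eqP; rewrite eqn_leq ik ki.
Qed.

Lemma bordered_idx1 k (i : nat) : (i < k + 1)%N ->
  cyc k (if (i < k)%N then i else (k + 1)%N) = i.+1.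
Proof.
rewrite addn1 ltnS => ik; case: ltnP => [|ki]; first exact: cyc_small.
have -> : i = k by apply/eqP; rewrite eqn_leq ik ki.
by rewrite /cyc ltnNge leqnSn gtn_eqF.
Qed.

(* Desnanot-Jacobi identity for Toeplitz determinants: apply
   [det_bordered_DJ] to the matrix of size k + 2 with indices cycled so that
   the leading block is the central minor T_k(n). *)
Lemma toep_DJ k n : toep k n != 0 ->
  toep k n * toep k.+2 n = toep k.+1 n ^+ 2 - toep k.+1 (n + 1) * toep k.+1 (n - 1).
Proof.
move=> Tk_neq0.
pose E i j := x (n + (cyc k j)%:Z - (cyc k i)%:Z).
have central : \matrix_(i < k, j < k) E i j = toep_mx k n.
  by apply/matrixP => i j; rewrite !mxE /E !cyc_small // toep_idxSS.
have k2 : (k < k + 2)%N by rewrite addn2 ltnS leqnSn.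
have k1 : (k < k + 1)%N by rewrite addn1.
have := @det_bordered_DJ _ k E; rewrite central unitmxE unitfE => /(_ Tk_neq0).
rewrite (det_cyc_conj k2 (fun i j : nat => x (n + j%:Z - i%:Z))).
have -> : \det (bordered k E 0 0) = toep (k + 1) n.
  rewrite /toep /toep_mx -(det_cyc_conj k1 (fun i j : nat => x (n + j%:Z - i%:Z))).
  by congr (\det _); apply/matrixP => i j; rewrite !mxE /E !bordered_idx0.
have -> : \det (bordered k E 1 1) = toep (k + 1) n.
  by congr (\det _); apply/matrixP => i j; rewrite !mxE /E !bordered_idx1 // toep_idxSS.
have -> : \det (bordered k E 0 1) * \det (bordered k E 1 0) =
    toep (k + 1) (n + 1) * toep (k + 1) (n - 1).
  rewrite /toep /toep_mx -(det_cyc_rows_cols k1 (fun i j : nat => x (n + 1 + j%:Z - i%:Z))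
                                  (fun i j : nat => x (n - 1 + j%:Z - i%:Z))).
  by congr (_ * _); congr (\det _); apply/matrixP => i j;
    rewrite !mxE /E bordered_idx0 // bordered_idx1 // (toep_idxSr, toep_idxSl).
by rewrite addn1 addn2 expr2.
Qed.

Lemma toep_ker0 m n (c : nat -> K) : toep m n != 0 ->
  (forall j : 'I_m, \sum_(i < m) c i * x (n + (j : nat)%:Z - (i : nat)%:Z) = 0) ->
  forall i : 'I_m, c i = 0.
Proof.
move=> Tm_neq0 hc i.
have uT : toep_mx m n \in unitmx by rewrite unitmxE unitfE.
pose v : 'rV[K]_m := \row_(l < m) c l.
have vT0 : v *m toep_mx m n = 0.
  by apply/matrixP => a j; rewrite !mxE -[RHS](hc j); apply: eq_bigr => l _; rewrite !mxE.
have : v = 0 by rewrite -(mulmxK uT v) vT0 mul0mx.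
by move/matrixP/(_ 0 i); rewrite !mxE.
Qed.

Lemma toep_ker_ex m n : toep m.+1 n = 0 ->
  exists c : nat -> K, (exists i : 'I_m.+1, c i != 0) /\
  forall j : 'I_m.+1, \sum_(i < m.+1) c i * x (n + (j : nat)%:Z - (i : nat)%:Z) = 0.
Proof.
move=> Tm0; have /det0P [v v_neq0 vT0] : \det (toep_mx m.+1 n) == 0.
  by rewrite -/(toep _ n) Tm0.
exists (fun i => v 0 (inord i)); split.
  case: (pickP (fun i : 'I_m.+1 => v 0 i != 0)) => [i vi|v0].
    by exists i; rewrite inord_val.
  case/negP: v_neq0; apply/eqP/matrixP => a j; rewrite ord1 mxE.
  by apply/eqP; move: (v0 j) => /= /negbFE.
move=> j; move/matrixP/(_ 0 j): vT0; rewrite !mxE => vT0j; rewrite -[RHS]vT0j.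
by apply: eq_bigr => l _; rewrite inord_val !mxE.
Qed.

End Toeplitz.

Section ConstantRecurrence.
Variables (K : fieldType) (x : int -> K) (p : nat).
Hypothesis toep_neq0 : forall n, toep x p.+1 n != 0.
Hypothesis toep_eq0 : forall n, toep x p.+2 n = 0.
Hypothesis toep_const : forall n, toep x p.+1 (n + 1) = toep x p.+1 n.

Definition kernel_at (n : int) (c : nat -> K) :=
  forall j : 'I_p.+2, \sum_(i < p.+2) c i * x (n + (j : nat)%:Z - (i : nat)%:Z) = 0.

(* The p + 1 equations shared by [kernel_at n] and [kernel_at (n + 1)]. *)
Definition shared_eqs (n : int) (c : nat -> K) :=
  forall j : 'I_p.+1, \sum_(i < p.+2) c i * x (n + (j.+1)%:Z - (i : nat)%:Z) = 0.

(* The shared equations at n, with the c_0 term split off: the remaining sum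
   is the p + 1 Toeplitz system at n applied to (c_1, ..., c_(p+1)). *)
Lemma shared_sum_split (c : nat -> K) (n : int) (j : nat) :
  \sum_(i < p.+2) c i * x (n + (j.+1)%:Z - (i : nat)%:Z) =
  c 0%N * x (n + (j.+1)%:Z) + \sum_(i < p.+1) c i.+1 * x (n + j%:Z - (i : nat)%:Z).
Proof.
rewrite big_ord_recl /= subr0; congr (_ + _).
by apply: eq_bigr => i _; rewrite toep_idxSS.
Qed.

Lemma kernel_shared_lo n c : kernel_at n c -> shared_eqs n c.
Proof. by move=> h j; move: (h (lift ord0 j)); rewrite lift0. Qed.

Lemma kernel_shared_hi n c : kernel_at (n + 1) c -> shared_eqs n c.
Proof.
move=> h j; rewrite -[RHS](h (widen_ord (leqnSn _) j)).
by apply: eq_bigr => i _; rewrite toep_idxSr.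
Qed.

(* The shared equations determine c from c_0, as T_{p+1}(n) != 0. *)
Lemma shared_eqs_uniq n c c' : c 0%N = c' 0%N -> shared_eqs n c -> shared_eqs n c' ->
  forall i : 'I_p.+2, c i = c' i.
Proof.
move=> c0 hc hc'.
have tail_eq : forall i : 'I_p.+1, c i.+1 - c' i.+1 = 0.
  apply: (toep_ker0 (c := fun i => c i.+1 - c' i.+1) (toep_neq0 n)) => j.
  have := hc j; have := hc' j; rewrite !shared_sum_split c0 => e' e.
  under eq_bigr do rewrite mulrBl; rewrite sumrB; apply/eqP; rewrite subr_eq0; apply/eqP.
  by apply: (addrI (c' 0%N * x (n + j.+1%:Z))); rewrite e e'.
by move=> i; case: (unliftP ord0 i) => [i'|] -> //=; apply/eqP; rewrite -subr_eq0 tail_eq.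
Qed.

(* For every n there is a kernel vector normalized by c_0 = 1: a kernel
   vector with c_0 = 0 would be killed by [toep_ker0]. *)
Lemma normalized_kernel n : exists c : nat -> K, c 0%N = 1 /\ kernel_at n c.
Proof.
have [c [[i0 ci0] hc]] := toep_ker_ex (toep_eq0 n).
have c0_neq0 : c 0%N != 0.
  apply: contraNneq ci0 => c00.
  have zero_eqs : shared_eqs n (fun=> 0) by move=> j; rewrite big1 // => i _; rewrite mul0r.
  by rewrite (shared_eqs_uniq (c' := fun=> 0) c00 (kernel_shared_lo hc) zero_eqs i0).
exists (fun i => c i / c 0%N); split; first by rewrite divff.
by move=> j; rewrite -[RHS](mulr0 (c 0%N)^-1) -[0 in RHS](hc j) mulr_sumr;
  apply: eq_bigr => i _; rewrite mulrAC mulrC.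
Qed.

Lemma kernel_at_eq n (c c' : nat -> K) :
  (forall i : 'I_p.+2, c i = c' i) -> kernel_at n c' -> kernel_at n c.
Proof. by move=> cc' h j; rewrite -[RHS](h j); apply: eq_bigr => i _; rewrite cc'. Qed.

Lemma kernel_shift n c : c 0%N = 1 -> kernel_at n c <-> kernel_at (n + 1) c.
Proof.
move=> c0; have c0c' c' : c' 0%N = 1 -> c 0%N = c' 0%N by move=> ->.
split => hc.
  have [c' [c'0 hc']] := normalized_kernel (n + 1).
  apply: kernel_at_eq (hc').
  exact: shared_eqs_uniq (c0c' _ c'0) (kernel_shared_lo hc) (kernel_shared_hi hc').
have [c' [c'0 hc']] := normalized_kernel n.
apply: kernel_at_eq (hc').
exact: shared_eqs_uniq (c0c' _ c'0) (kernel_shared_hi hc) (kernel_shared_lo hc').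
Qed.

Lemma constant_kernel : exists c : nat -> K, c 0%N = 1 /\ forall n, kernel_at n c.
Proof.
have [c [c0 hc0]] := normalized_kernel 0.
exists c; split => //; elim/int_ind => // k hk.
  by rewrite -addn1 PoszD -kernel_shift.
by rewrite kernel_shift // (_ : _ + 1 = - k%:Z) //; lia.
Qed.

(* The companion matrix of c, which shifts the Toeplitz matrix by one. *)
Definition companion (c : nat -> K) : 'M[K]_p.+1 :=
  \matrix_(i, j) if (i : nat) == 0%N then - c (j : nat).+1 else ((i : nat) == (j : nat).+1)%:R.

Lemma det_companion c : \det (companion c) = (-1) ^+ p.+1 * c p.+1.
Proof.
rewrite (expand_det_col _ ord_max) big_ord_recl big1 ?addr0; last first.
  by move=> i _; rewrite !mxE /= eqSS (ltn_eqF (ltn_ord i)) mul0r.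
rewrite /cofactor; have -> : row' ord0 (col' ord_max (companion c)) = 1%:M.
  apply/matrixP => a b.
  by rewrite !mxE /= /bump [(p <= b)%N]leqNgt ltn_ord /= add0n add1n eqSS.
by rewrite det1 mulr1 !mxE /= add0n exprS mulN1r !mulNr mulrC.
Qed.

(* Rows 1..p of T(n+1) are rows 0..p-1 of T(n); row 0 of T(n+1) is
   -sum_(i >= 1) c_i (row i-1 of T(n)) by the kernel equation at n + 1. *)
Lemma toep_shift_companion c n : c 0%N = 1 -> kernel_at (n + 1) c ->
  toep_mx x p.+1 (n + 1) = companion c *m toep_mx x p.+1 n.
Proof.
move=> c0 hc; apply/matrixP => i j; rewrite !mxE.
case: (unliftP ord0 i) => [i'|] -> /=.
  rewrite (bigD1 (widen_ord (leqnSn p) i')) //= big1 ?addr0.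
    by rewrite !mxE /= /bump /= add1n eqxx mul1r -toep_idxSr toep_idxSS.
  move=> l; rewrite -val_eqE /= => l_neq.
  by rewrite !mxE /= /bump /= add1n eqSS eq_sym (negbTE l_neq) mul0r.
have := hc (widen_ord (leqnSn _) j); rewrite big_ord_recl /= c0 mul1r.
move=> /eqP; rewrite addr_eq0 => /eqP ->; rewrite -sumrN; apply: eq_bigr => l _.
by rewrite !mxE /= /bump /= add1n mulNr -toep_idxSr toep_idxSS.
Qed.

Lemma toep_recurrence : exists c : nat -> K, c 0%N = 1 /\ c p.+1 = (-1) ^+ p.+1 /\
  forall M : int, \sum_(i < p.+2) c i * x (M - (i : nat)%:Z) = 0.
Proof.
have [c [c0 hc]] := constant_kernel.
exists c; split => //; split.
  have := toep_const 0; rewrite /toep (toep_shift_companion c0 (hc _)).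
  rewrite det_mulmx det_companion -[RHS]mul1r => /(mulIf (toep_neq0 0)) sc.
  by rewrite -[c _](signrMK p.+1) sc mulr1.
by move=> M; rewrite -[RHS](hc M ord0); apply: eq_bigr => i _; rewrite addr0.
Qed.

End ConstantRecurrence.

Lemma recurrence_reversal (K : fieldType) (x : int -> K) (p : nat) (c : nat -> K) :
  c 0%N = 1 -> c p.+1 = (-1) ^+ p.+1 ->
  (forall M : int, \sum_(i < p.+2) c i * x (M - (i : nat)%:Z) = 0) ->
  exists d : nat -> K, d 0%N = 1 /\ d p.+1 = 1 /\
    forall n : int, \sum_(m < p.+2) (-1) ^+ m * d (p.+1 - m)%N * x (n + (m : nat)%:Z) = 0.
Proof.
move=> c0 cN hc; exists (fun k => (-1) ^+ k * c k); split; first by rewrite expr0 mul1r.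
split; first by rewrite cN -expr2 sqrr_sign.
move=> n; have := hc (n + p.+1%:Z); rewrite (reindex_inj rev_ord_inj) /= => hc_rev.
rewrite -[RHS](mulr0 ((-1) ^+ p.+1)) -[0 in RHS]hc_rev mulr_sumr; apply: eq_bigr => m _.
have mp : (m <= p.+1)%N := ltn_ord m.
have -> : x (n + p.+1%:Z - (p.+1 - m)%N%:Z) = x (n + m%:Z) by congr x; lia.
by rewrite subSS mulrA -exprD subnKC // mulrA.
Qed.

Section QSystem.
(* R : nat -> int -> K satisfies the A_r Q-system relations with boundary
   values R_{0,n} = R_{r+1,n} = 1; its initial values play no role. *)
Variables (K : fieldType) (r : nat) (R : nat -> int -> K).
Hypothesis R_boundary : forall n : int, R 0%N n = 1 /\ R r.+1 n = 1.
Hypothesis R_neq0 : forall (a : nat) (n : int), (a <= r.+1)%N -> R a n != 0.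
Hypothesis R_rel : forall (a : nat) (n : int), (1 <= a <= r)%N ->
  R a (n + 1) * R a (n - 1) = R a n ^+ 2 + R a.+1 n * R a.-1 n.

Fixpoint toep_sign (a : nat) : bool :=
  if a is a'.+2 then ~~ toep_sign a' else false.

(* One induction step: the Q-system relation at a + 1 against the
   Desnanot-Jacobi identity at a determines R_{a+2} from lower data. *)
Lemma QDJ_step (Ra Ra1p Ra1m Ra1 Ra2 Ta Ta1p Ta1m Ta1 Ta2 s t : K) :
  s ^+ 2 = 1 -> t ^+ 2 = 1 -> Ta != 0 ->
  Ra = t * Ta -> Ra1p = s * Ta1p -> Ra1m = s * Ta1m -> Ra1 = s * Ta1 ->
  Ra1p * Ra1m = Ra1 ^+ 2 + Ra2 * Ra ->
  Ta * Ta2 = Ta1 ^+ 2 - Ta1p * Ta1m ->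
  Ra2 = - t * Ta2.
Proof.
move=> ss tt Ta_neq0 -> -> -> -> hQ hDJ.
have Ra2tTa : Ra2 * (t * Ta) = s ^+ 2 * (Ta1p * Ta1m - Ta1 ^+ 2).
  by rewrite -[Ra2 * _](addKr ((s * Ta1) ^+ 2)) -hQ; ring.
have : (Ra2 * t + Ta2) * Ta = 0.
  by rewrite mulrDl -mulrA Ra2tTa ss mul1r (mulrC Ta2) hDJ; ring.
move/eqP; rewrite mulf_eq0 (negbTE Ta_neq0) orbF addr_eq0 => /eqP Ra2t.
by rewrite -[Ra2]mulr1 -tt expr2 mulrA Ra2t; ring.
Qed.

Let x := R 1%N.

Lemma Qsystem_toep a : (a <= r)%N -> forall n,
  R a n = (-1) ^+ toep_sign a * toep x a n /\
  R a.+1 n = (-1) ^+ toep_sign a.+1 * toep x a.+1 n.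
Proof.
elim: a => [|a IH] ar n.
  rewrite /toep det_mx00 det_mx11 !mxE /= expr0 !mul1r (R_boundary n).1.
  by rewrite /x addr0 subr0.
have {}IH := IH (ltnW ar).
split; first exact: (IH n).2.
have Ta_neq0 : toep x a n != 0.
  move: (@R_neq0 a n (leq_trans (ltnW ar) (leqnSn r))).
  by rewrite (IH n).1 mulf_eq0 negb_or => /andP[].
have a1r : (1 <= a.+1 <= r)%N by rewrite ltn0Sn.
rewrite (QDJ_step (sqrr_sign _ _) (sqrr_sign _ _) Ta_neq0 (IH n).1
  (IH (n + 1)).2 (IH (n - 1)).2 (IH n).2 (@R_rel a.+1 n a1r) (toep_DJ Ta_neq0)).
by rewrite /= signrN.
Qed.

Lemma toep_top n : toep x r.+1 n = (-1) ^+ toep_sign r.+1.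
Proof.
have := (Qsystem_toep (leqnn r) n).2; rewrite (R_boundary n).2.
by move=> /(congr1 ( *%R ((-1) ^+ toep_sign r.+1))); rewrite mulr1 signrMK.
Qed.

(* ... and then the Desnanot-Jacobi identity at r forces T_{r+2}(n) = 0. *)
Lemma toep_top_vanish n : toep x r.+2 n = 0.
Proof.
have Tr_neq0 : toep x r n != 0.
  move: (@R_neq0 r n (leqnSn r)).
  by rewrite (Qsystem_toep (leqnn r) n).1 mulf_eq0 negb_or => /andP[].
have := toep_DJ Tr_neq0; rewrite !toep_top expr2 subrr => /eqP.
by rewrite mulf_eq0 (negbTE Tr_neq0) => /eqP.
Qed.

Theorem Qsystem_first_row_recurrence :
  exists c : nat -> K, c 0%N = 1 /\ c r.+1 = 1 /\
    forall n : int, \sum_(m < r.+2) (-1) ^+ m * c (r.+1 - m)%N * R 1%N (n + (m : nat)%:Z) = 0.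
Proof.
have toep_top_neq0 n : toep x r.+1 n != 0 by rewrite toep_top signr_eq0.
have toep_top_const n : toep x r.+1 (n + 1) = toep x r.+1 n by rewrite !toep_top.
have [c [c0 [cN hc]]] := toep_recurrence toep_top_neq0 toep_top_vanish toep_top_const.
exact: (recurrence_reversal c0 cN hc).
Qed.

End QSystem.

Unset Implicit Arguments.

(* The initial values in [is_Qsystem] and the assumption r >= 1 are not needed. *)
Theorem mainTheorem2 (r : nat) (hr : (1 <= r)%N) (R : nat -> int -> ratfun (r + r))
  (hR : is_Qsystem R) :
  exists c : nat -> ratfun (r + r),
    c 0%N = 1 /\ c r.+1 = 1 /\
    forall n : int,
      \sum_(m < r.+2) (-1) ^+ m * c (r.+1 - m)%N * R 1%N (n + (m : nat)%:Z) = 0.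
Proof.
case: hR => _ R_boundary R_neq0 R_rel.
exact: (Qsystem_first_row_recurrence R_boundary R_neq0 R_rel).
Qed.
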